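(* Let $\phi\colon(T,X)\to(T,Y)$ be a proximal extension of compact dynamics such that $X$ has a dense set of a.p. points. Then $(T,X)$ is an M-dynamic if and only if $(T,Y)$ is an M-dynamic.
   Context: $T$ is a group or monoid acting continuously. An extension is a continuous equivariant surjection; it is proximal if for every $(x,x')$ with $\phi x=\phi x'$ the orbit closure $\overline{T(x,x')}$ meets the diagonal $\Delta_X$. A point is a.p. if its return times to every neighborhood form a syndetic subset of $T$ (i.e. there is compact $K$ with $Kt\cap A\ne\emptyset$ for all $t$). A dynamic is topologically transitive if $\{t:V\cap tU\ne\emptyset\}\ne\emptyset$ for all nonempty open $U,V$; it is an M-dynamic if it is topologically transitive and has a dense set of a.p. points. *)

From HB Require Import structures.
From mathcomp Require Import all_boot all_order all_algebra.
From mathcomp Require Import all_classical all_reals all_analysis.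
Set Implicit Arguments. Unset Strict Implicit. Unset Printing Implicit Defensive.
Local Open Scope classical_set_scope.

Definition is_monoid {T : Type} (mul : T -> T -> T) (e : T) :=
  (forall s t u, mul s (mul t u) = mul (mul s t) u) /\
  (forall t, mul e t = t) /\ (forall t, mul t e = t).

Definition topological_monoid {T : topologicalType} (mul : T -> T -> T) (e : T) :=
  is_monoid mul e /\ continuous (fun p : T * T => mul p.1 p.2).

Definition cont_action {T X : topologicalType} (mul : T -> T -> T) (e : T)
    (act : T -> X -> X) :=
  (forall x, act e x = x) /\
  (forall s t x, act (mul s t) x = act s (act t x)) /\
  continuous (fun p : T * X => act p.1 p.2).

Definition compact_space (X : topologicalType) :=
  compact [set: X] /\ hausdorff_space X.

Definition syndetic {T : topologicalType} (mul : T -> T -> T) (A : set T) :=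
  exists K : set T, compact K /\ forall t, exists2 k, K k & A (mul k t).

Definition return_times {T X : Type} (act : T -> X -> X) (x : X) (U : set X) :=
  [set t | U (act t x)].

Definition ap_point {T X : topologicalType} (mul : T -> T -> T)
    (act : T -> X -> X) (x : X) :=
  forall U, nbhs x U -> syndetic mul (return_times act x U).

Definition top_transitive {T X : topologicalType} (act : T -> X -> X) :=
  forall U V : set X, open U -> open V -> U !=set0 -> V !=set0 ->
    exists t, (V `&` (act t @` U)) !=set0.

Definition M_dynamic {T X : topologicalType} (mul : T -> T -> T)
    (act : T -> X -> X) :=
  top_transitive act /\ dense [set x | ap_point mul act x].

Definition extension {T X Y : topologicalType} (actX : T -> X -> X)
    (actY : T -> Y -> Y) (phi : X -> Y) :=
  continuous phi /\ (forall y, exists x, phi x = y) /\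
  (forall t x, phi (actX t x) = actY t (phi x)).

Definition proximal_extension {T X Y : topologicalType} (actX : T -> X -> X)
    (actY : T -> Y -> Y) (phi : X -> Y) :=
  extension actX actY phi /\
  forall x x' : X, phi x = phi x' ->
    exists z : X, closure [set (actX t x, actX t x') | t in [set: T]] (z, z).

From mathcomp Require Import all_boot all_order all_algebra.
From mathcomp Require Import all_classical all_reals all_analysis.
Set Implicit Arguments. Unset Strict Implicit. Unset Printing Implicit Defensive.
Local Open Scope classical_set_scope.

(* Transitivity and almost periodicity pass to factors along any extension.
   Conversely, if x is almost periodic then its orbit closure is minimal, so
   any point proximal to x has x in its own orbit closure.  Hence for U open
   and x a.p. in U, the closed set phi(X \ T^{-1}U) misses phi x, and its open
   complement O in Y satisfies phi^{-1} O ⊆ T^{-1}U.  Transitivity of Y applied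
   to two such sets O_U, O_V, together with a.p. points of X returning to the
   relevant open set, yields transitivity of X. *)

Definition orbit {T X : Type} (act : T -> X -> X) (x : X) := range (act^~ x).

Definition hitting_set {T X : Type} (act : T -> X -> X) (U : set X) :=
  [set w | exists t, U (act t w)].

Section Orbits.
Variables (T X : topologicalType) (mul : T -> T -> T) (act : T -> X -> X).
Hypothesis act_mul : forall s t x, act (mul s t) x = act s (act t x).
Hypothesis act_cont : continuous (fun p : T * X => act p.1 p.2).

Lemma continuous_act (s : T) : continuous (act s).
Proof.
move=> p A /(@act_cont (s, p)) [[P Q] /= [Ps Qp] PQ].
apply: filterS Qp => q Qq.
by apply: (PQ (s, q)); split => //; exact: nbhs_singleton Ps.
Qed.

Lemma open_hitting_set (U : set X) : open U -> open (hitting_set act U).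
Proof.
move=> oU; have -> : hitting_set act U = \bigcup_t (act t @^-1` U).
  by apply/seteqP; split => w [t]; exists t.
by apply: bigcup_open => t _; move/continuousP: (@continuous_act t); apply.
Qed.

Lemma proximal_pair_times (x x' z : X) :
  closure [set (act t x, act t x') | t in [set: T]] (z, z) ->
  forall B, nbhs z B -> exists t, B (act t x) /\ B (act t x').
Proof.
move=> zcl B Bz.
have BBz : nbhs (z, z) (B `*` B) by exists (B, B).
by have [_ [[t _ <-] [/= Bx Bx']]] := zcl _ BBz; exists t.
Qed.

Hypothesis cX : compact_space X.

Lemma ap_point_orbit_closure (x w : X) : ap_point mul act x ->
  closure (orbit act x) w -> closure (orbit act w) x.
Proof.
move=> apx wcl N Nx; apply: contrapT => Nmiss.
have [N2 N2x N2N] : exists2 N2, nbhs x N2 & closure N2 `<=` N.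
  by apply: (@compact_regular X x setT cX.2 cX.1 filterT N Nx).
have [K [cK Kret]] := apx _ N2x.
(* If the orbit of w avoided N, compactness of K would give a neighbourhood
   of w all of whose points p have K p outside cl N2; it contains some t x,
   contradicting syndeticity of the returns of x to N2. *)
have Kavoid : \forall p \near w, K `<=` (fun k => ~ closure N2 (act k p)).
  apply: (proj1 (compact_near_coveringP K) cK X (nbhs w)
    (fun p k => ~ closure N2 (act k p))) => k _.
  have : nbhs (act k w) (~` closure N2).
    apply: open_nbhs_nbhs; split; first exact/closed_openC/closed_closure.
    by move=> /N2N Nkw; apply: Nmiss; exists (act k w); split => //; exists k.
  exact: (@act_cont (k, w)).
have [_ [[t _ <-] Kt]] := wcl _ Kavoid.
have [k Kk N2k] := Kret t.
by apply: (Kt k Kk); apply: subset_closure; rewrite /return_times /= -act_mul.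
Qed.

Lemma ap_point_proximal_orbit_closure (x x' z : X) : ap_point mul act x ->
  closure [set (act t x, act t x') | t in [set: T]] (z, z) ->
  closure (orbit act x') x.
Proof.
move=> apx zcl N Nx.
have zcl_x : closure (orbit act x) z.
  move=> B /(proximal_pair_times zcl) [t [Bt _]].
  by exists (act t x); split => //; exists t.
have [_ [[s _ <-] Ns]] := ap_point_orbit_closure apx zcl_x (nbhs_interior Nx).
have : nbhs z (act s @^-1` N°).
  by apply: continuous_act; apply: open_nbhs_nbhs; split => //; exact: open_interior.
move=> /(proximal_pair_times zcl) [t [_ Nst]].
exists (act (mul s t) x'); split; first by exists (mul s t).
by rewrite act_mul; exact: interior_subset.
Qed.

End Orbits.

Arguments continuous_act {T X act} act_cont s.

Section Extension.
Variables (T X Y : topologicalType) (mul : T -> T -> T).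
Variables (actX : T -> X -> X) (actY : T -> Y -> Y) (phi : X -> Y).
Hypothesis phi_ext : extension actX actY phi.

Let phi_cont : continuous phi. Proof. by case: phi_ext. Qed.
Let phi_surj : forall y, exists x, phi x = y. Proof. by case: phi_ext => _ []. Qed.
Let phi_equiv : forall t x, phi (actX t x) = actY t (phi x).
Proof. by case: phi_ext => _ []. Qed.

Let open_preimage (U : set Y) : open U -> open (phi @^-1` U).
Proof. by move/continuousP: phi_cont; apply. Qed.

Let preimage_neq0 (U : set Y) : U !=set0 -> phi @^-1` U !=set0.
Proof. by move=> [y Uy]; have [x xy] := phi_surj y; exists x; rewrite /= xy. Qed.

Lemma top_transitive_factor : top_transitive actX -> top_transitive actY.
Proof.
move=> trX U V oU oV U0 V0.
have [t [p [Vp [q Uq qp]]]] := trX _ _ (open_preimage oU) (open_preimage oV)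
  (preimage_neq0 U0) (preimage_neq0 V0).
by exists t, (phi p); split => //; exists (phi q); rewrite // -qp phi_equiv.
Qed.

Lemma ap_point_factor (x : X) : ap_point mul actX x -> ap_point mul actY (phi x).
Proof.
move=> apx N /phi_cont Nx; have [K [cK Kret]] := apx _ Nx.
exists K; split => // t; have [k Kk Nk] := Kret t.
by exists k => //; rewrite /return_times /= -phi_equiv.
Qed.

Lemma dense_ap_point_factor :
  dense [set x | ap_point mul actX x] -> dense [set y | ap_point mul actY y].
Proof.
move=> dX O O0 oO.
have [x [Ox apx]] := dX _ (preimage_neq0 O0) (open_preimage oO).
by exists (phi x); split => //; exact: ap_point_factor.
Qed.

Hypothesis actX_mul : forall s t x, actX (mul s t) x = actX s (actX t x).
Hypothesis actX_cont : continuous (fun p : T * X => actX p.1 p.2).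
Hypothesis cX : compact_space X.
Hypothesis hY : hausdorff_space Y.
Hypothesis phi_prox : forall x x' : X, phi x = phi x' ->
  exists z : X, closure [set (actX t x, actX t x') | t in [set: T]] (z, z).
Hypothesis dense_ap : dense [set x | ap_point mul actX x].

Lemma proximal_hitting_base (U : set X) : open U -> U !=set0 ->
  exists2 O : set Y, open O /\ O !=set0 &
    phi @^-1` O `<=` hitting_set actX U.
Proof.
move=> oU U0; have [x [Ux apx]] := dense_ap U0 oU.
have Ccompact : compact (phi @` ~` hitting_set actX U).
  apply: continuous_compact; first exact: continuous_subspaceT.
  apply: (subclosed_compact _ cX.1) => //.
  exact/open_closedC/open_hitting_set.
exists (~` (phi @` ~` hitting_set actX U)); last first.
  by move=> w /= Ow; apply: contrapT => nGw; apply: Ow; exists w.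
split; first exact/closed_openC/(compact_closed hY).
exists (phi x) => -[w nGw /esym /phi_prox [z zcl]]; apply: nGw.
have [_ [[t _ <-] Ut]] := ap_point_proximal_orbit_closure actX_mul actX_cont cX apx zcl
  (open_nbhs_nbhs (conj oU Ux)).
by exists t.
Qed.

Hypothesis actY_cont : continuous (fun p : T * Y => actY p.1 p.2).

Lemma top_transitive_proximal_lift : top_transitive actY -> top_transitive actX.
Proof.
move=> trY U V oU oV U0 V0.
have [OU [oOU OU0] OU_hit] := proximal_hitting_base oU U0.
have [OV [oOV OV0] OV_hit] := proximal_hitting_base oV V0.
have [t [p [OVp [y OUy yp]]]] := trY _ _ oOU oOV OU0 OV0.
rewrite -yp in OVp.
pose W := phi @^-1` (OU `&` actY t @^-1` OV).
have oW : open W.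
  apply/open_preimage/openI => //.
  by move/continuousP: (continuous_act actY_cont t); apply.
have [z [Wz apz]] := dense_ap (preimage_neq0 (ex_intro _ y (conj OUy OVp))) oW.
have [r Urz] := OU_hit _ Wz.1.
have rz_orbit : closure (orbit actX z) (actX r z) by apply: subset_closure; exists r.
have [_ [[s _ <-] [_ OVts]]] := ap_point_orbit_closure actX_mul actX_cont cX apz
  rz_orbit (open_nbhs_nbhs (conj oW Wz)).
rewrite /= -phi_equiv in OVts.
have [q Vq] := OV_hit _ OVts.
exists (mul q (mul t s)), (actX q (actX t (actX s (actX r z)))); split => //.
by exists (actX r z) => //; rewrite !actX_mul.
Qed.

End Extension.

Theorem lemma3p8 (T : topologicalType) (mul : T -> T -> T) (e : T)
  (X Y : topologicalType) (actX : T -> X -> X) (actY : T -> Y -> Y)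
  (phi : X -> Y) :
  topological_monoid mul e ->
  cont_action mul e actX -> cont_action mul e actY ->
  compact_space X -> compact_space Y ->
  proximal_extension actX actY phi ->
  dense [set x | ap_point mul actX x] ->
  (M_dynamic mul actX <-> M_dynamic mul actY).
Proof.
move=> _ [_ [actX_mul actX_cont]] [_ [_ actY_cont]] cX [_ hY] [phi_ext phi_prox] dX.
split=> [[trX _] | [trY _]]; split => //.
- exact: top_transitive_factor phi_ext trX.
- exact: dense_ap_point_factor phi_ext dX.
- exact: (top_transitive_proximal_lift phi_ext actX_mul actX_cont cX hY phi_prox dX).
Qed.
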